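(* Let $\mathcal{X}$ be a finite set of locations with metric $d$, let $\pi$ be a prior distribution on $\mathcal{X}$ with $\pi(x)>0$ for all $x\in\mathcal{X}$, let $\{\Phi_k\}$ be a partition of $\mathcal{X}$ into nonempty disjoint sets, let $\epsilon_k\ge 0$ for each $k$, and let $E_m\ge 0$. Let $f(\cdot\mid\cdot)$ be an obfuscation mechanism that satisfies $\epsilon_k$-differential privacy on each $\Phi_k$, i.e. $f(x'\mid x)\le e^{\epsilon_k} f(x'\mid y)$ for all $x,y\in\Phi_k$ and all $x'\in\mathcal{X}$. Suppose that for every $k$, $$E'(\Phi_k)\ \ge\ e^{\epsilon_k}E_m .$$ Then for every pseudo-location $x'\in\mathcal{X}$ with $\Pr(x')>0$, the conditional expected inference error of the optimal inference attack satisfies $ExpEr(x')\ge E_m$.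
   Context: An obfuscation mechanism is a family of probability distributions $f(\cdot\mid x)$ on $\mathcal{X}$, one for each true location $x\in\mathcal{X}$; $f(x'\mid x)$ is the probability of reporting pseudo-location $x'$ when the true location is $x$. The adversary knows $\pi$ and $f$. Define $\Pr(x')=\sum_{x\in\mathcal{X}}\pi(x)f(x'\mid x)$ and, when $\Pr(x')>0$, the posterior $\Pr(x\mid x')=\pi(x)f(x'\mid x)/\Pr(x')$. The conditional expected inference error (of the optimal inference attack) is $$ExpEr(x')=\min_{\hat{x}\in\mathcal{X}}\sum_{x\in\mathcal{X}}\Pr(x\mid x')\,d(\hat{x},x).$$ For a nonempty $\Phi\subseteq\mathcal{X}$, define $$E'(\Phi)=\min_{\hat{x}\in\mathcal{X}}\sum_{x\in\Phi}\frac{\pi(x)}{\sum_{y\in\Phi}\pi(y)}\,d(\hat{x},x)$$ (note the minimum ranges over all of $\mathcal{X}$, not just $\Phi$). *)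

From HB Require Import structures.
From mathcomp Require Import all_boot all_order all_algebra.
From mathcomp Require Import reals sequences exp.
Set Implicit Arguments. Unset Strict Implicit. Unset Printing Implicit Defensive.
Import Order.TTheory GRing.Theory Num.Theory.
Local Open Scope ring_scope.

(* Minimum of g over the (nonempty, witnessed by x0) finite type X.
   The value does not depend on the witness x0. *)
Definition minX (R : realType) (X : finType) (x0 : X) (g : X -> R) : R :=
  g (Order.arg_min x0 xpredT g).

Definition is_metric (R : realType) (X : finType) (d : X -> X -> R) : Prop :=
  (forall x y, 0 <= d x y) /\ (forall x y, d x y = 0 <-> x = y) /\
  (forall x y, d x y = d y x) /\ (forall x y z, d x z <= d x y + d y z).

Definition is_distr (R : realType) (X : finType) (pi : X -> R) : Prop :=
  (forall x, 0 <= pi x) /\ \sum_(x : X) pi x = 1.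

(* f x' x = f(x' | x): for each x, f(. | x) is a distribution *)
Definition is_mechanism (R : realType) (X : finType) (f : X -> X -> R) : Prop :=
  forall x, is_distr (fun x' => f x' x).

Definition Prx (R : realType) (X : finType) (pi : X -> R) (f : X -> X -> R) (x' : X) : R :=
  \sum_(x : X) pi x * f x' x.

Definition posterior (R : realType) (X : finType) (pi : X -> R) (f : X -> X -> R) (x' x : X) : R :=
  pi x * f x' x / Prx pi f x'.

Definition ExpEr (R : realType) (X : finType) (d : X -> X -> R) (pi : X -> R)
  (f : X -> X -> R) (x' : X) : R :=
  minX x' (fun xh => \sum_(x : X) posterior pi f x' x * d xh x).

(* E'(Phi), minimum over all of X; x0 is any element of X *)
Definition Eprime (R : realType) (X : finType) (d : X -> X -> R) (pi : X -> R)
  (x0 : X) (Phi : {set X}) : R :=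
  minX x0 (fun xh => \sum_(x in Phi) (pi x / \sum_(y in Phi) pi y) * d xh x).

From HB Require Import structures.
From mathcomp Require Import all_boot all_order all_algebra.
From mathcomp Require Import reals sequences exp.
From mathcomp Require Import ring.
Set Implicit Arguments. Unset Strict Implicit. Unset Printing Implicit Defensive.
Import Order.TTheory GRing.Theory Num.Theory.
Local Open Scope ring_scope.

(* Fix a pseudo-location x' with Pr(x') > 0 and an arbitrary
   guess xh; we show Em <= sum_x Pr(x | x') d(xh, x), which bounds the
   minimum ExpEr(x').  Clearing the denominator Pr(x') and splitting both
   sums along the partition, it suffices to prove, for each block Phi,
     Em * A <= S,   A = sum_{y in Phi} pi(y) f(x'|y),
                    S = sum_{x in Phi} pi(x) f(x'|x) d(xh, x).
   Differential privacy on Phi gives A <= e^eps * pi(Phi) * f(x'|x) for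
   every x in Phi (a weighted average is below e^eps times any value), and
   the definition of E' gives pi(Phi) * E'(Phi) <= sum_{x in Phi} pi(x)
   d(xh, x).  Chaining these with the hypothesis e^eps Em <= E'(Phi) yields
   e^eps pi(Phi) (Em A) <= e^eps pi(Phi) S. *)

Lemma minX_le (R : realType) (X : finType) (x0 : X) (g : X -> R) (y : X) :
  minX x0 g <= g y.
Proof. by rewrite /minX; case: arg_minP => // i _; apply. Qed.

Lemma minX_ge (R : realType) (X : finType) (x0 : X) (g : X -> R) (c : R) :
  (forall y, c <= g y) -> c <= minX x0 g.
Proof. by move=> lb; apply: lb. Qed.

Lemma mass_gt0 (R : realType) (X : finType) (w : X -> R) (Phi : {set X}) :
  (forall x, 0 < w x) -> Phi != set0 -> 0 < \sum_(x in Phi) w x.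
Proof.
move=> w_gt0 /set0Pn[y yPhi]; rewrite (bigD1 y) //=.
by rewrite ltr_pwDl // sumr_ge0 // => x _; apply/ltW.
Qed.

Lemma weighted_sum_le (R : realType) (X : finType) (w g : X -> R)
    (Phi : {set X}) (c : R) (x : X) :
  (forall y, 0 <= w y) -> (forall y, y \in Phi -> g y <= c * g x) ->
  \sum_(y in Phi) w y * g y <= c * (\sum_(y in Phi) w y) * g x.
Proof.
move=> w_ge0 g_le; rewrite mulr_sumr mulr_suml; apply: ler_sum => y yPhi.
by rewrite -mulrA mulrCA ler_wpM2l ?g_le.
Qed.

Lemma Eprime_mass_le (R : realType) (X : finType) (d : X -> X -> R)
    (pi : X -> R) (x0 : X) (Phi : {set X}) (xh : X) :
  0 < \sum_(y in Phi) pi y ->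
  (\sum_(y in Phi) pi y) * Eprime d pi x0 Phi <= \sum_(x in Phi) pi x * d xh x.
Proof.
set mass := \sum_(y in Phi) pi y => mass_gt0.
have -> : \sum_(x in Phi) pi x * d xh x =
    mass * \sum_(x in Phi) (pi x / mass) * d xh x.
  by rewrite mulr_sumr; apply: eq_bigr => x _; field; rewrite gt_eqF.
by rewrite ler_pM2l // minX_le.
Qed.

Lemma block_error_ge (R : realType) (X : finType) (d : X -> X -> R)
    (pi : X -> R) (f : X -> X -> R) (Phi : {set X}) (e Em : R) (x' xh : X) :
  (forall x, 0 < pi x) -> (forall x, 0 <= d xh x) -> (forall x, 0 <= f x' x) ->
  Phi != set0 ->
  (forall x y, x \in Phi -> y \in Phi -> f x' x <= expR e * f x' y) ->
  expR e * Em <= Eprime d pi x' Phi ->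
  Em * \sum_(y in Phi) pi y * f x' y <= \sum_(x in Phi) pi x * f x' x * d xh x.
Proof.
move=> pi_gt0 d_ge0 f_ge0 Phi_neq0 dp Em_le.
set mass := \sum_(y in Phi) pi y.
set A := \sum_(y in Phi) pi y * f x' y.
have mass_pos : 0 < mass by apply: mass_gt0.
have A_ge0 : 0 <= A by apply: sumr_ge0 => y _; rewrite mulr_ge0 ?(ltW (pi_gt0 y)).
have A_le x : x \in Phi -> A <= expR e * mass * f x' x.
  by move=> xPhi; apply: weighted_sum_le => [y|y yPhi]; [apply/ltW | apply: dp].
rewrite -(ler_pM2l (mulr_gt0 (expR_gt0 e) mass_pos)).
have -> : expR e * mass * (Em * A) = A * (mass * (expR e * Em)) by ring.
apply: le_trans (_ : A * \sum_(x in Phi) pi x * d xh x <= _).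
  rewrite ler_wpM2l //; apply: le_trans (Eprime_mass_le d x' xh mass_pos).
  by apply: ler_wpM2l; [exact: ltW | exact: Em_le].
rewrite mulr_sumr mulr_sumr; apply: ler_sum => x xPhi.
have -> : expR e * mass * (pi x * f x' x * d xh x) =
  pi x * d xh x * (expR e * mass * f x' x) by ring.
by rewrite [A * _]mulrC; apply: ler_wpM2l; [rewrite mulr_ge0 ?(ltW (pi_gt0 x)) | exact: A_le].
Qed.

Lemma posterior_risk (R : realType) (X : finType) (d : X -> X -> R)
    (pi : X -> R) (f : X -> X -> R) (x' xh : X) :
  \sum_x posterior pi f x' x * d xh x =
  (\sum_x pi x * f x' x * d xh x) / Prx pi f x'.
Proof. by rewrite mulr_suml; apply: eq_bigr => x _; rewrite /posterior mulrAC. Qed.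

Lemma sum_partition (R : realType) (X : finType) (P : {set {set X}}) (F : X -> R) :
  partition P [set: X] -> \sum_x F x = \sum_(Phi in P) \sum_(x in Phi) F x.
Proof.
case/and3P=> /eqP cover_P triv_P _.
by rewrite -(big_trivIset _ triv_P) cover_P; apply: eq_bigl => x; rewrite inE.
Qed.

Theorem theorem4 (R : realType) (X : finType) (d : X -> X -> R) (pi : X -> R)
  (P : {set {set X}}) (eps : {set X} -> R) (Em : R) (f : X -> X -> R) :
  is_metric d ->
  is_distr pi -> (forall x, 0 < pi x) ->
  partition P [set: X] ->
  (forall Phi, Phi \in P -> 0 <= eps Phi) ->
  0 <= Em ->
  is_mechanism f ->
  (forall Phi, Phi \in P -> forall x y x', x \in Phi -> y \in Phi ->
     f x' x <= expR (eps Phi) * f x' y) ->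
  (forall Phi x0, Phi \in P -> expR (eps Phi) * Em <= Eprime d pi x0 Phi) ->
  forall x', 0 < Prx pi f x' -> Em <= ExpEr d pi f x'.
Proof.
move=> [d_ge0 _] _ pi_gt0 partP _ _ mech dp Em_le x' Pr_gt0.
have f_ge0 x : 0 <= f x' x by case: (mech x).
apply: minX_ge => xh; rewrite posterior_risk ler_pdivlMr //.
rewrite /Prx !(sum_partition _ partP) mulr_sumr; apply: ler_sum => Phi PhiP.
apply: (@block_error_ge _ _ d pi f Phi (eps Phi)) => //; last exact: Em_le.
- by apply: contraTneq PhiP => ->; case/and3P: partP.
- by move=> x y xPhi yPhi; apply: dp.
Qed.
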